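(* The poset $\mathcal{FP}^c$ of nonempty faces of the Voronoi cell $V^c_O$ of the origin for the lattice of integer cuts $L\subset K$ (with respect to $q$), ordered by inclusion, is isomorphic to the poset $\mathcal{CAC}$ of coherent acyclic orientations of cut subgraphs of $G$.
   Context: $G=(V,E)$ is a finite connected graph (parallel edges allowed); each edge gives oriented edges $e,\bar e$, $\mathbb E$ the set of oriented edges. Real $1$-cochains are $x:\mathbb E\to\mathbb R$ with $x_{\bar e}=-x_e$, with $\langle x,y\rangle=\sum_{e\in E}x_ey_e$ and $q(x)=\langle x,x\rangle$. For $f:V\to\mathbb R$, $d(f)(e)=f(u)-f(v)$ where $u$ is the head and $v$ the tail of $e$. $K=\{d(f): f:V\to\mathbb R\}$ and $L=\{d(f): f:V\to\mathbb Z\}$ (the lattice of integer cuts). $V^c_\lambda=\{x\in K: q(x-\lambda)\le q(x-\mu)\ \forall\mu\in L\}$. A subgraph $H'$ is a cut subgraph if there is a partition $V_1,\dots,V_s$ of $V$ such that $H'$ consists exactly of the edges joining different parts. An orientation of such $H'$ is coherent acyclic if for some such partition defining $H'$ every edge between $V_i$ and $V_j$, $i<j$, is oriented from $V_i$ to $V_j$. $\mathcal{CAC}$ is the set of coherent acyclic orientations of cut subgraphs (including the empty one, $s=1$), with $D_1\preceq D_2$ iff $D_2\subseteq D_1$ (i.e. the subgraph of $D_2$ is contained in that of $D_1$ and the orientations agree). *)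

From HB Require Import structures.
From mathcomp Require Import all_boot all_order all_algebra.
Set Implicit Arguments. Unset Strict Implicit. Unset Printing Implicit Defensive.
Import Order.TTheory GRing.Theory Num.Theory.
Local Open Scope ring_scope.

(* A finite graph with parallel edges: vertex type V, edge type E, each edge e
   has a head [hd e] and a tail [tl e] (the reference orientation of e; the
   opposite oriented edge is \bar e).  A real 1-cochain is a function
   E -> R giving its value on the reference orientation (x_{\bar e} = - x_e). *)

Definition gadj (V E : finType) (hd tl : E -> V) : rel V :=
  fun u v => [exists e, ((hd e == u) && (tl e == v)) || ((hd e == v) && (tl e == u))].

Definition gconnected (V E : finType) (hd tl : E -> V) : Prop :=
  forall u v : V, connect (gadj hd tl) u v.

Definition cobound (R : realFieldType) (V E : finType) (hd tl : E -> V)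
  (f : V -> R) : E -> R := fun e => f (hd e) - f (tl e).

Definition cinner (R : realFieldType) (E : finType) (x y : E -> R) : R :=
  \sum_(e : E) x e * y e.
Definition cq (R : realFieldType) (E : finType) (x : E -> R) : R := cinner x x.

Definition inK (R : realFieldType) (V E : finType) (hd tl : E -> V) (x : E -> R) : Prop :=
  exists f : V -> R, forall e, x e = cobound hd tl f e.

Definition inL (R : realFieldType) (V E : finType) (hd tl : E -> V) (x : E -> R) : Prop :=
  exists f : V -> int, forall e, x e = cobound hd tl (fun v => (f v)%:~R : R) e.

Definition voronoiO (R : realFieldType) (V E : finType) (hd tl : E -> V) (x : E -> R) : Prop :=
  inK hd tl x /\
  forall mu : E -> R, inL hd tl mu -> cq x <= cq (fun e => x e - mu e).

(* F is a face of the polytope P: the set of points of P maximizing some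
   linear functional <w, .> on P (w = 0 gives P itself). *)
Definition is_face (R : realFieldType) (E : finType) (P F : (E -> R) -> Prop) : Prop :=
  exists w : E -> R,
    forall x, F x <-> (P x /\ forall y, P y -> cinner w y <= cinner w x).

Definition nonempty_face (R : realFieldType) (E : finType) (P F : (E -> R) -> Prop) : Prop :=
  is_face P F /\ exists x, F x.

(* An oriented subgraph: for each edge, None = edge not in the subgraph,
   Some true = oriented from tl e to hd e, Some false = from hd e to tl e. *)
Definition orient (E : finType) := {ffun E -> option bool}.

(* D is a coherent acyclic orientation of a cut subgraph: there is a partition
   V_0, ..., V_{s-1} of V into nonempty parts (vertex v lies in part p v) such
   that the subgraph of D is exactly the set of edges joining different parts,
   each oriented from the part of smaller index to the one of larger index. *)
Definition is_CAC (V E : finType) (hd tl : E -> V) (D : orient E) : Prop :=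
  exists (s : nat) (p : V -> 'I_s),
    (forall i : 'I_s, exists v, p v = i) /\
    forall e, D e = if p (tl e) == p (hd e) then None
                    else Some (p (tl e) < p (hd e))%N.

(* D1 <= D2 iff D2 is contained in D1 (subgraph inclusion + same orientations) *)
Definition cac_le (E : finType) (D1 D2 : orient E) : Prop :=
  forall e, D2 e != None -> D1 e = D2 e.

From HB Require Import structures.
From mathcomp Require Import all_boot all_order all_algebra ring zify.
From Stdlib Require Import FunctionalExtensionality.
Set Implicit Arguments. Unset Strict Implicit. Unset Printing Implicit Defensive.
Import Order.TTheory GRing.Theory Num.Theory.
Local Open Scope ring_scope.

(* A nonempty face of the Voronoi cell maximizes some functional, which may be replaced by its
   orthogonal projection [d g] onto [K].  By the coarea formula, [d g] is a nonnegative
   combination of the cuts of the upper level sets of [g], and every cut [c] satisfies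
   [2 <c, x> <= |c|_1 = q c] on the cell; so the maximizers of [<d g, .>] are the points where
   all these level cuts are tight.  This only depends on the sign pattern of [d g], i.e. on the
   coherent acyclic orientation induced by the partition of [V] into level sets of [g].
   Comparing sign patterns through [N d g1 - d g2] for large [N] shows that inclusion of faces
   corresponds to inclusion of oriented cut subgraphs. *)

Lemma mulmx_trmx_eq0 (R : realFieldType) m n (N : 'M[R]_(m, n)) :
  N *m N^T = 0 -> N = 0.
Proof.
move=> NNt0; apply/matrixP => i j; rewrite mxE.
have /eqP : (N *m N^T) i i = 0 by rewrite NNt0 mxE.
rewrite mxE psumr_eq0; last by move=> k _; rewrite mxE -expr2 sqr_ge0.
move/allP/(_ j (mem_index_enum _)).
by rewrite mxE mulf_eq0 orbb => /eqP.
Qed.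

Lemma trmx_sub_mulmx_trmx (R : realFieldType) m n (M : 'M[R]_(m, n)) :
  (M^T <= M *m M^T)%MS.
Proof.
have [_] := mxrank_leqif_sup (submxMl M M^T); move=> <-.
rewrite eqn_leq mxrankS ?submxMl //= mxrank_tr.
have ker_sub : (kermx (M *m M^T) <= kermx M)%MS.
  apply/sub_kermxP; apply: mulmx_trmx_eq0.
  by rewrite trmx_mul !mulmxA -(mulmxA _ M) mulmx_ker mul0mx.
have := mxrankS ker_sub; rewrite !mxrank_ker => le_ker.
by rewrite -(subKn (rank_leq_row M)) -(subKn (rank_leq_row (M *m M^T))) leq_sub2l.
Qed.

Lemma normr_sum_same_sign (R : realDomainType) n (a u : nat -> R) :
  (forall i, (i < n)%N -> 0 <= a i) -> (forall i, 0 <= u i) \/ (forall i, u i <= 0) ->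
  `|\sum_(i < n) a i * u i| = \sum_(i < n) a i * `|u i|.
Proof.
move=> a_ge0 [u_ge0|u_le0].
  rewrite ger0_norm; last by apply: sumr_ge0 => i _; rewrite mulr_ge0 ?a_ge0.
  by apply: eq_bigr => i _; rewrite ger0_norm.
rewrite ler0_norm; last by apply: sumr_le0 => i _; rewrite mulr_ge0_le0 ?a_ge0.
by rewrite -sumrN; apply: eq_bigr => i _; rewrite ler0_norm // mulrN.
Qed.

Lemma rank_decomposition (T : finType) (R : realDomainType) (g : T -> R) :
  exists s (p : T -> 'I_s) (c : nat -> R),
  [/\ forall i, exists v, p v = i, forall v, g v = c (p v) &
       {in [pred j | (j < s)%N] &, {mono c : i j / (i < j)%N >-> i < j}}].
Proof.
set vals := sort <=%O (undup (map g (enum T))).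
have vals_sorted : sorted <%O vals by rewrite sort_lt_sorted undup_uniq.
have vals_g v : g v \in vals by rewrite mem_sort mem_undup map_f ?mem_enum.
exists (size vals), (fun v => Ordinal (etrans (index_mem _ _) (vals_g v))), (nth 0 vals).
split=> [i|v|]; last exact: lt_sorted_ltn_nth.
  have : nth 0 vals i \in vals by rewrite mem_nth.
  rewrite mem_sort mem_undup => /mapP [v _ g_v].
  by exists v; apply: val_inj; rewrite /= -g_v index_uniq // sort_uniq undup_uniq.
by rewrite /= nth_index.
Qed.

Lemma normr_le_sqr_int (R : realDomainType) (z : int) :
  `|z%:~R : R| <= z%:~R * z%:~R.
Proof. by rewrite -intr_norm -intrM ler_int; nia. Qed.

Section Cochains.
Variables (R : realFieldType) (E : finType).
Implicit Types (x y z s : E -> R).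

Definition cnorm1 y : R := \sum_e `|y e|.

Lemma cinnerC x y : cinner x y = cinner y x.
Proof. by apply: eq_bigr => e _; rewrite mulrC. Qed.

Lemma cinnerBl x y z : cinner (fun e => x e - y e) z = cinner x z - cinner y z.
Proof. by rewrite /cinner -sumrB; apply: eq_bigr => e _; rewrite mulrBl. Qed.

Lemma cinnerZl (c : R) y z : cinner (fun e => c * y e) z = c * cinner y z.
Proof. by rewrite /cinner mulr_sumr; apply: eq_bigr => e _; rewrite mulrA. Qed.

Lemma cq_subr x y : cq (fun e => x e - y e) = cq x - cinner x y *+ 2 + cq y.
Proof.
rewrite /cq /cinner -sumrMnl -sumrB -big_split /=; apply: eq_bigr => e _.
by rewrite -!expr2 sqrrB.
Qed.

Lemma cinner_le_cnorm1 s y : (forall e, `|s e| <= 1) -> cinner s y <= cnorm1 y.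
Proof.
move=> s_le1; apply: ler_sum => e _; apply: le_trans (ler_norm _) _.
by rewrite normrM ler_piMl.
Qed.

Lemma cinner_eq_cnorm1P s y : (forall e, `|s e| <= 1) ->
  cinner s y = cnorm1 y <-> forall e, s e * y e = `|y e|.
Proof.
move=> s_le1; split=> [eq_sy e|eq_sy]; last by apply: eq_bigr => e _; rewrite eq_sy.
have /eqP : cnorm1 y - cinner s y = 0 by rewrite eq_sy subrr.
rewrite /cnorm1 /cinner -sumrB psumr_eq0; last first.
  by move=> e' _; rewrite subr_ge0 (le_trans (ler_norm _)) // normrM ler_piMl.
by move/allP/(_ e (mem_index_enum _)); rewrite subr_eq0 => /eqP.
Qed.

Lemma cnorm1_scale_subr (N : R) y z : 0 <= N ->
  (forall e, z e != 0 -> Num.sg (y e) = Num.sg (z e)) ->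
  (forall e, y e != 0 -> `|z e| <= N * `|y e|) ->
  cnorm1 (fun e => N * y e - z e) = N * cnorm1 y - cnorm1 z.
Proof.
move=> N_ge0 sg_yz le_zy; rewrite /cnorm1 mulr_sumr -sumrB; apply: eq_bigr => e _.
have [->|z_neq0] := eqVneq (z e) 0; first by rewrite normr0 !subr0 normrM ger0_norm.
have y_neq0 : y e != 0 by rewrite -sgr_eq0 sg_yz // sgr_eq0.
rewrite {1}[y e]numEsg {1}[z e]numEsg -sg_yz // mulrCA -mulrBr normrM.
by rewrite normr_sg y_neq0 mul1r ger0_norm // subr_ge0 le_zy.
Qed.

End Cochains.

Section VoronoiCell.
Variables (R : realFieldType) (V E : finType) (hd tl : E -> V).
Local Notation C := (@voronoiO R V E hd tl).
Local Notation d := (cobound hd tl).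
Implicit Types (x y mu : E -> R) (g : V -> R) (D : orient E).

(* For a cut [y] one has [q y = cnorm1 y], and [tight y x] says that [x] lies on the
   bisector of [0] and [y]. *)
Definition tight y x := cinner y x *+ 2 = cnorm1 y.

Lemma voronoiOP x :
  C x <-> inK hd tl x /\ forall mu, inL hd tl mu -> cinner mu x *+ 2 <= cq mu.
Proof.
have le_sub mu : (cq x <= cq (fun e => x e - mu e)) = (cinner mu x *+ 2 <= cq mu).
  by rewrite cq_subr cinnerC -addrA lerDl addrC subr_ge0.
by split=> -[Kx Cx]; split=> // mu /Cx; rewrite le_sub.
Qed.

Definition indic (b : V -> bool) : V -> R := fun v => (b v)%:R.

Lemma cut_bound (b : V -> bool) x : C x ->
  cinner (d (indic b)) x *+ 2 <= cnorm1 (d (indic b)).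
Proof.
have -> : cnorm1 (d (indic b)) = cq (d (indic b)).
  apply: eq_bigr => e _; rewrite /cobound /indic.
  by case: (b (hd e)); case: (b (tl e));
    rewrite ?subrr ?subr0 ?sub0r ?normrN ?normr1 ?normr0 ?mulr0 ?mulr1 ?mulN1r ?opprK.
move=> /voronoiOP[_ Cx]; apply: Cx.
by exists (fun v => (b v : nat)%:Z).
Qed.

Definition layer (p : V -> nat) (j : nat) : E -> R := d (indic (fun v => (j < p v)%N)).

Lemma layer_same_sign p e :
  (forall j, 0 <= layer p j e) \/ (forall j, layer p j e <= 0).
Proof.
rewrite /layer /cobound /indic.
have [le_tl_hd|lt_hd_tl] := leqP (p (tl e)) (p (hd e)); [left|right] => j.
  rewrite subr_ge0 ler_nat; case: (ltnP j (p (tl e))) => // lt_j.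
  by rewrite (leq_trans lt_j le_tl_hd).
rewrite subr_le0 ler_nat; case: (ltnP j (p (hd e))) => // lt_j.
by rewrite (ltn_trans lt_j lt_hd_tl).
Qed.

Definition layer_comb (p : V -> nat) (B : nat) (a : nat -> R) : E -> R :=
  fun e => \sum_(j < B) a j * layer p j e.

Section LayerComb.
Variables (p : V -> nat) (B : nat) (a : nat -> R).
Hypothesis a_ge0 : forall j, (j < B)%N -> 0 <= a j.

Lemma cinner_layer_comb x :
  cinner (layer_comb p B a) x = \sum_(j < B) a j * cinner (layer p j) x.
Proof.
rewrite /cinner; under eq_bigr do rewrite mulr_suml.
rewrite exchange_big; apply: eq_bigr => j _; rewrite mulr_sumr.
by apply: eq_bigr => e _; rewrite mulrA.
Qed.

Lemma cnorm1_layer_comb :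
  cnorm1 (layer_comb p B a) = \sum_(j < B) a j * cnorm1 (layer p j).
Proof.
under [RHS]eq_bigr do rewrite mulr_sumr.
rewrite /cnorm1 exchange_big; apply: eq_bigr => e _.
by rewrite (normr_sum_same_sign (u := fun j => layer p j e)) //; apply: layer_same_sign.
Qed.

Lemma layer_comb_bound x :
  C x -> cinner (layer_comb p B a) x *+ 2 <= cnorm1 (layer_comb p B a).
Proof.
move=> Cx; rewrite cinner_layer_comb cnorm1_layer_comb -sumrMnl.
by apply: ler_sum => j _; rewrite -mulrnAr ler_wpM2l ?a_ge0 ?cut_bound.
Qed.

End LayerComb.

Lemma sum_telescope_prefix (c : nat -> R) (B k : nat) : (k <= B)%N ->
  \sum_(j < B) (c j.+1 - c j) * ((j < k)%N : nat)%:R = c k - c 0%N.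
Proof.
move=> le_kB; rewrite -(telescope_sumr c (leq0n k)) big_mkord.
rewrite (big_ord_widen B (fun j => c j.+1 - c j) le_kB).
by rewrite [RHS]big_mkcond; apply: eq_bigr => j _; case: ifP; rewrite ?mulr1 ?mulr0.
Qed.

Lemma cobound_layer_comb (p : V -> nat) B (c : nat -> R) : (forall v, p v <= B)%N ->
  d (fun v => c (p v)) = layer_comb p B (fun j => c j.+1 - c j).
Proof.
move=> le_pB; apply: functional_extensionality => e.
rewrite /layer_comb /layer /cobound /indic; under eq_bigr do rewrite mulrBr.
by rewrite sumrB !sum_telescope_prefix // opprB addrA subrK.
Qed.

(* Coarea formula: [d g] is a nonnegative combination of cuts. *)
Lemma cobound_bound g x : C x -> cinner (d g) x *+ 2 <= cnorm1 (d g).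
Proof.
have [s [p [c [_ g_cp c_mono]]]] := rank_decomposition g.
have -> : d g = layer_comb (fun v => p v) s.-1 (fun j => c j.+1 - c j).
  rewrite -cobound_layer_comb => [|v]; last first.
    by rewrite -ltnS prednK ?ltn_ord // (leq_ltn_trans _ (ltn_ord (p v))).
  by apply: functional_extensionality => e; rewrite /cobound !g_cp.
apply: layer_comb_bound => j lt_j; rewrite subr_ge0 ltW // c_mono ?inE //.
  by rewrite (leq_trans lt_j) // leq_pred.
by rewrite -ltn_predRL.
Qed.

Definition incidence : 'M[R]_(#|V|, #|E|) :=
  \matrix_(i, j) (((hd (enum_val j) == enum_val i) : nat)%:R
                  - ((tl (enum_val j) == enum_val i) : nat)%:R).
Definition vrow (f : V -> R) : 'rV[R]_#|V| := \row_i f (enum_val i).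
Definition erow (y : E -> R) : 'rV[R]_#|E| := \row_j y (enum_val j).

Lemma vrow_incidence (f : V -> R) : vrow f *m incidence = erow (d f).
Proof.
have pick_f u : \sum_(i < #|V|) f (enum_val i) * ((u == enum_val i) : nat)%:R = f u.
  rewrite -(big_enum_val (fun v => f v * ((u == v) : nat)%:R)) /= (bigD1 u) //=.
  rewrite eqxx mulr1 big1 ?addr0 // => v; rewrite eq_sym => /negbTE ->.
  by rewrite mulr0.
apply/matrixP => i j; rewrite !mxE /cobound.
by under eq_bigr do rewrite !mxE mulrBr; rewrite sumrB !pick_f.
Qed.

Lemma cinner_erow y z : cinner y z = (erow y *m (erow z)^T) 0 0.
Proof.
rewrite mxE /cinner (big_enum_val (fun e => y e * z e)) /=.
by apply: eq_bigr => j _; rewrite !mxE.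
Qed.

(* Projection onto [K]: the normal equations for the incidence matrix are solvable. *)
Lemma exists_orthogonal_cobound (w : E -> R) :
  exists g, forall k, cinner (d g) (d k) = cinner w (d k).
Proof.
have /submxP[X w_X] : (erow w *m incidence^T <= incidence *m incidence^T)%MS.
  exact: submx_trans (submxMl _ _) (trmx_sub_mulmx_trmx incidence).
pose g v := X 0 (enum_rank v).
have X_g : X = vrow g by apply/matrixP => i j; rewrite !mxE /g enum_valK (ord1 i).
exists g => k; rewrite !cinner_erow -!vrow_incidence !trmx_mul !mulmxA.
by rewrite -(mulmxA _ incidence) -X_g -w_X.
Qed.

(* [x] is half the projection onto [K] of the sign vector [s] of [d f]; for an integer cut
   [mu], [2 <mu, x> = <s, mu> <= |mu|_1 <= q mu]. *)
Lemma exists_sign_point (f : V -> R) : exists x, [/\ C x, tight (d f) x &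
  forall g, tight (d g) x -> forall e, d g e != 0 -> Num.sg (d g e) = Num.sg (d f e)].
Proof.
pose s e := Num.sg (d f e).
have s_le1 e : `|s e| <= 1 by rewrite normr_sg; case: (_ != 0).
have [g g_proj] := exists_orthogonal_cobound s.
pose x e := d g e / 2.
have x_proj k : cinner (d k) x *+ 2 = cinner s (d k).
  rewrite -g_proj cinnerC /cinner -sumrMnl; apply: eq_bigr => e _.
  by rewrite -mulrnAr -mulr_natr mulrCA /x divfK ?pnatr_eq0 // mulrC.
have tightP h : tight (d h) x <-> forall e, s e * d h e = `|d h e|.
  by rewrite /tight x_proj; exact: cinner_eq_cnorm1P.
exists x; split.
- apply/voronoiOP; split; first by exists (fun v => g v / 2) => e; rewrite /x /cobound mulrBl.
  move=> mu [k mu_k]; rewrite (functional_extensionality _ _ mu_k) x_proj.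
  apply: le_trans (cinner_le_cnorm1 _ s_le1) _; apply: ler_sum => e _.
  by rewrite /cobound -intrB normr_le_sqr_int.
- by apply/tightP => e; rewrite /s -normrEsg.
- move=> h /tightP s_h e h_neq0; apply: (mulIf h_neq0).
  by rewrite -normrEsg -s_h.
Qed.

Lemma maximizer_tight g x : C x ->
  (forall y, C y -> cinner (d g) y <= cinner (d g) x) <-> tight (d g) x.
Proof.
move=> Cx; split=> [max_x|tight_x y Cy]; last first.
  by rewrite -(@ler_pMn2r _ 2%N) // tight_x cobound_bound.
have [x0 [Cx0 tight_x0 _]] := exists_sign_point g.
apply/eqP; rewrite eq_le cobound_bound //= -tight_x0 ler_pMn2r //.
exact: max_x.
Qed.

(* [d (N g1 - g2)] has the same signs as [d g1] once [N] is large, so its bound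
   together with the tightness of [d g1] forces that of [d g2]. *)
Lemma tight_sign_transfer g1 g2 x : C x ->
  (forall e, d g2 e != 0 -> Num.sg (d g1 e) = Num.sg (d g2 e)) ->
  tight (d g1) x -> tight (d g2) x.
Proof.
move=> Cx sg12 tight1.
pose N := \sum_(e | d g1 e != 0) `|d g2 e| / `|d g1 e|.
have N_ge0 : 0 <= N by apply: sumr_ge0 => e _; rewrite divr_ge0.
have le21 e : d g1 e != 0 -> `|d g2 e| <= N * `|d g1 e|.
  move=> g1_neq0; rewrite -ler_pdivrMr ?normr_gt0 // /N (bigD1 e) //=.
  by rewrite lerDl sumr_ge0 // => e' _; rewrite divr_ge0.
have d_N : d (fun v => N * g1 v - g2 v) = fun e => N * d g1 e - d g2 e.
  by apply: functional_extensionality => e; rewrite /cobound; ring.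
have := cobound_bound (fun v => N * g1 v - g2 v) Cx.
rewrite d_N cnorm1_scale_subr // cinnerBl cinnerZl mulrnBl -mulrnAr tight1.
by rewrite lerD2l lerN2 => le2; apply/eqP; rewrite eq_le cobound_bound.
Qed.

Definition osign (o : option bool) : R :=
  if o is Some b then (if b then 1 else -1) else 0.

Lemma osign_eq0 o : (osign o == 0) = (o == None).
Proof. by case: o => [[]|] /=; rewrite ?oppr_eq0 ?oner_eq0 ?eqxx. Qed.

Lemma osign_inj : injective osign.
Proof.
have lt_N10 : (-1 : R) < 1 by rewrite gtrN ?ltr01.
by case=> [[]|] [[]|] //= /eqP; rewrite ?(lt_eqF lt_N10) ?(gt_eqF lt_N10)
  ?oppr_eq0 ?oner_eq0 // eq_sym ?oppr_eq0 ?oner_eq0.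
Qed.

Definition cac_face (D : orient E) (x : E -> R) : Prop :=
  C x /\ forall g, (forall e, Num.sg (d g e) = osign (D e)) -> tight (d g) x.

Lemma cac_faceE D g x : (forall e, Num.sg (d g e) = osign (D e)) ->
  cac_face D x <-> C x /\ tight (d g) x.
Proof.
move=> sg_g; split=> -[Cx tight_x]; split=> //; first exact: tight_x.
move=> g' sg_g'; apply: tight_sign_transfer tight_x => // e _.
by rewrite sg_g sg_g'.
Qed.

Lemma sg_cobound_cut s (p : V -> 'I_s) (c : nat -> R) D :
  {in [pred j | (j < s)%N] &, {mono c : i j / (i < j)%N >-> i < j}} ->
  (forall e, D e = if p (tl e) == p (hd e) then None else Some (p (tl e) < p (hd e))%N) ->
  forall e, Num.sg (d (fun v => c (p v)) e) = osign (D e).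
Proof.
move=> c_mono D_p e; rewrite D_p /cobound -val_eqE /=.
have c_lt u v : (c (p u) < c (p v)) = (p u < p v)%N by rewrite c_mono ?inE.
case: ltngtP => [lt_tl_hd|lt_hd_tl|/val_inj ->] /=.
- by rewrite gtr0_sg // subr_gt0 c_lt.
- by rewrite ltr0_sg // subr_lt0 c_lt.
- by rewrite subrr sgr0.
Qed.

Lemma sg_cobound_CAC s (p : V -> 'I_s) D :
  (forall e, D e = if p (tl e) == p (hd e) then None else Some (p (tl e) < p (hd e))%N) ->
  forall e, Num.sg (d (fun v => (p v)%:R) e) = osign (D e).
Proof. by apply: sg_cobound_cut => i j _ _; rewrite ltr_nat. Qed.

Lemma cac_face_nonempty D : is_CAC hd tl D -> nonempty_face C (cac_face D).
Proof.
move=> [s [p [_ /sg_cobound_CAC sg_p]]]; split.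
  exists (d (fun v => (p v)%:R)) => x; rewrite (cac_faceE _ sg_p).
  by split=> -[Cx ?]; split=> //; apply/maximizer_tight.
have [x [Cx tight_x _]] := exists_sign_point (fun v => (p v)%:R).
by exists x; apply/(cac_faceE _ sg_p).
Qed.

Lemma nonempty_face_cac F : nonempty_face C F ->
  exists D, is_CAC hd tl D /\ forall x, F x <-> cac_face D x.
Proof.
move=> [[w F_w] _].
have [g g_proj] := exists_orthogonal_cobound w.
have [s [p [c [p_surj g_cp c_mono]]]] := rank_decomposition g.
pose D : orient E :=
  [ffun e => if p (tl e) == p (hd e) then None else Some (p (tl e) < p (hd e))%N].
have D_p e : D e = if p (tl e) == p (hd e) then None else Some (p (tl e) < p (hd e))%N.
  by rewrite ffunE.
have sg_g e : Num.sg (d g e) = osign (D e).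
  by rewrite /cobound !g_cp; exact: (sg_cobound_cut c_mono D_p e).
have w_g y : inK hd tl y -> cinner w y = cinner (d g) y.
  by move=> [k y_k]; rewrite (functional_extensionality _ _ y_k) g_proj.
exists D; split=> [|x]; first by exists s, p.
rewrite F_w (cac_faceE _ sg_g); split=> [[Cx max_x]|[Cx tight_x]]; split=> //.
  apply: (iffLR (maximizer_tight g Cx)) => y Cy.
  by rewrite -!w_g ?max_x //; [case: Cx | case: Cy].
move=> y Cy; rewrite !w_g; last by [case: Cy]; last by [case: Cx].
exact: (iffRL (maximizer_tight g Cx)).
Qed.

Lemma cac_le_face D1 D2 : is_CAC hd tl D1 -> is_CAC hd tl D2 ->
  cac_le D1 D2 <-> forall x, cac_face D1 x -> cac_face D2 x.
Proof.
move=> [s1 [p1 [_ /sg_cobound_CAC sg1]]] [s2 [p2 [_ /sg_cobound_CAC sg2]]].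
split=> [le12 x|sub12 e D2e].
  rewrite (cac_faceE _ sg1) (cac_faceE _ sg2) => -[Cx tight1]; split=> //.
  apply: tight_sign_transfer tight1 => // e.
  by rewrite -sgr_eq0 sg1 sg2 osign_eq0 => /le12 ->.
have [x [Cx tight1 sg_x]] := exists_sign_point (fun v => (p1 v)%:R).
have /(cac_faceE _ sg2) [_ tight2] : cac_face D2 x by apply/sub12/(cac_faceE _ sg1).
have /sg_x : d (fun v => (p2 v)%:R : R) e != 0 by rewrite -sgr_eq0 sg2 osign_eq0.
by rewrite sg1 sg2 => /(_ tight2) /osign_inj.
Qed.

End VoronoiCell.

Theorem mainTheorem12 (R : realFieldType) (V E : finType) (hd tl : E -> V)
  (Vne : (0 < #|V|)%N) (conn : gconnected hd tl) :
  exists g : orient E -> ((E -> R) -> Prop),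
    (forall D, is_CAC hd tl D -> nonempty_face (voronoiO hd tl) (g D)) /\
    (forall F, nonempty_face (voronoiO hd tl) F ->
       exists D, is_CAC hd tl D /\ forall x, F x <-> g D x) /\
    (forall D1 D2, is_CAC hd tl D1 -> is_CAC hd tl D2 ->
       (cac_le D1 D2 <-> forall x, g D1 x -> g D2 x)).
Proof.
(* Orientations are compared as edge labellings. *)
exists (@cac_face R V E hd tl).
split; [exact: cac_face_nonempty | split; [exact: nonempty_face_cac | exact: cac_le_face]].
Qed.
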